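(* Let $a_1,\dots,a_n$ be positive integers, $P=\mathbf{a_1}\oplus\cdots\oplus\mathbf{a_n}$ with top antichain summand $A_n$, and $I\in\mathcal{IC}(P)$. Then \[\mathrm{Row}(I)=\begin{cases}P-I & \text{if } I=\emptyset,\ A_n\subseteq I,\text{ or } I\subseteq A_n,\\ \Delta(\lceil I\rceil)-\Delta(\mathrm{Min}(I)) & \text{otherwise.}\end{cases}\]
   Context: For posets $P,Q$, the ordinal sum $P\oplus Q$ has underlying set the disjoint union of $P$ and $Q$, with $x\le y$ iff $x\le_P y$, or $x\le_Q y$, or $x\in P$ and $y\in Q$. $\mathbf{a}$ denotes an antichain with $a$ elements; in $\mathbf{a_1}\oplus\cdots\oplus\mathbf{a_n}$, $A_i$ is the $i$-th summand, $A_1$ at the bottom. All posets are finite. A subset $I\subseteq P$ is interval-closed if for all $x,y\in I$ and $z\in P$ with $x\le z\le y$ we have $z\in I$; $\mathcal{IC}(P)$ is the set of interval-closed subsets of $P$. For $x\in P$ the toggle $t_x:\mathcal{IC}(P)\to\mathcal{IC}(P)$ is defined by $t_x(I)=I\triangle\{x\}$ if $I\triangle\{x\}\in\mathcal{IC}(P)$ and $t_x(I)=I$ otherwise. Rowmotion is $\mathrm{Row}=t_{x_1}\circ t_{x_2}\circ\cdots\circ t_{x_N}$, where $(x_1,\dots,x_N)$ is a linear extension of $P$ (toggling from the top down). For $S\subseteq P$, $\Delta(S)$ is the smallest order ideal containing $S$ and $\nabla(S)$ the smallest order filter containing $S$; $\mathrm{Min}(S)$ is the set of minimal elements of $S$;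 the ceiling $\lceil I\rceil$ is the set of minimal elements of $\nabla(I)-I$. *)

From mathcomp Require Import all_boot.
Set Implicit Arguments. Unset Strict Implicit. Unset Printing Implicit Defensive.

(* A finite poset is given by a finType T together with its order relation
   [le : rel T] (assumed to be a partial order where it matters). *)
Section GenPoset.
Variables (T : finType) (le : rel T).

Definition interval_closed (I : {set T}) : bool :=
  [forall x in I, forall y in I, forall z, (le x z && le z y) ==> (z \in I)].

Definition sdiff1 (I : {set T}) (x : T) : {set T} :=
  if x \in I then I :\ x else x |: I.

Definition toggle (x : T) (I : {set T}) : {set T} :=
  if interval_closed (sdiff1 I x) then sdiff1 I x else I.

Definition linear_extension (s : seq T) : Prop :=
  perm_eq s (enum T) /\
  forall x y, le x y -> index x s <= index y s.

(* Row = t_{x_1} o t_{x_2} o ... o t_{x_N} (toggling from the top down) *)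
Definition Row (s : seq T) (I : {set T}) : {set T} :=
  foldr toggle I s.

Definition Delta (S : {set T}) : {set T} := [set y | [exists x in S, le y x]].
Definition Nabla (S : {set T}) : {set T} := [set y | [exists x in S, le x y]].

Definition Min (S : {set T}) : {set T} :=
  [set x in S | [forall y in S, le y x ==> (y == x)]].

Definition ceiling (I : {set T}) : {set T} := Min (Nabla I :\: I).

End GenPoset.

(* The ordinal sum a_1 (+) ... (+) a_n of antichains: elements are pairs
   (i, j) with i < n the summand (level, 0 = bottom) and j < a_i. *)
Definition OSum (n : nat) (a : 'I_n -> nat) : finType :=
  {i : 'I_n & 'I_(a i)}.

Definition osum_le (n : nat) (a : 'I_n -> nat) : rel (OSum a) :=
  fun x y => (x == y) || (nat_of_ord (tag x) < nat_of_ord (tag y)).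

(* the i-th summand A_{i+1} (0-indexed) *)
Definition summand (n : nat) (a : 'I_n -> nat) (i : nat) : {set OSum a} :=
  [set x : OSum a | nat_of_ord (tag x) == i].

Definition top_summand (n : nat) (a : 'I_n -> nat) : {set OSum a} :=
  summand a n.-1.

From mathcomp Require Import all_boot zify.
Set Implicit Arguments. Unset Strict Implicit. Unset Printing Implicit Defensive.

(* Rowmotion toggles the elements of I from the top of a linear extension
   downwards, so when x is toggled every element above x already carries its
   final value while every element below x still carries its value in I.
   Hence if a set R satisfies the pointwise condition [rowmotion_spec I R]
   ("x is in R iff toggling x in the mixed state 'R above x, I below x'
   yields x"), then Row(I) = R (lemma [Row_of_spec]).

   For P = a_1 (+) ... (+) a_n every relation reduces to a comparison of
   levels.  If I is an order filter or consists of maximal elements (the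
   cases I = {}, A_n <= I, I <= A_n), the complement P - I satisfies the
   specification.  Otherwise, with l the lowest level of I and c the lowest
   level above l meeting P - I, both Delta(ceil I) - Delta(Min I) and the
   specification are described by the explicit "window" of levels [l, c]. *)

Section Toggling.
Variables (T : finType) (le : rel T).

Definition lt (x y : T) : bool := (y != x) && le x y.

Lemma interval_closedP (S : {set T}) :
  reflect (forall u w z, u \in S -> w \in S -> lt u z -> lt z w -> z \in S)
          (interval_closed le S).
Proof.
apply: (iffP forallP) => [icS u w z uS wS /andP[_ le_uz] /andP[_ le_zw] | icS u].
  move/implyP/(_ uS)/forallP/(_ w)/implyP/(_ wS)/forallP/(_ z)/implyP: (icS u).
  by apply; rewrite le_uz.
apply/implyP => uS; apply/forallP => w; apply/implyP => wS.
apply/forallP => z; apply/implyP => /andP[le_uz le_zw].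
have [-> //|zu] := eqVneq z u; have [<- //|wz] := eqVneq w z.
by apply: (icS u w z); rewrite // /lt ?zu ?wz.
Qed.

Lemma toggle_interval_closed x (S : {set T}) :
  interval_closed le S -> interval_closed le (toggle le x S).
Proof. by rewrite /toggle; case: ifP. Qed.

Lemma interval_closed_setD1 (S : {set T}) x :
  interval_closed le S -> x \in S ->
  interval_closed le (S :\ x) <-> ~ exists u w, [/\ u \in S, w \in S, lt u x & lt x w].
Proof.
move=> /interval_closedP icS xS; split.
  move=> /interval_closedP icSx [u [w [uS wS ux xw]]].
  suff : x \in S :\ x by rewrite !inE eqxx.
  apply: (icSx u w) => //; rewrite in_setD1 ?uS ?wS andbT.
    by rewrite eq_sym; case/andP: ux.
  by case/andP: xw.
move=> not_between; apply/interval_closedP => u w z.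
rewrite !in_setD1 => /andP[_ uS] /andP[_ wS] uz zw.
rewrite (icS u w z) // andbT; apply/eqP => zx; subst z.
by apply: not_between; exists u, w.
Qed.

Hypothesis le_anti : antisymmetric le.
Hypothesis le_trans : transitive le.

Lemma lt_asym x y : lt x y -> ~~ lt y x.
Proof.
case/andP=> yx le_xy; apply/negP => /andP[_ le_yx].
by move: yx; rewrite (le_anti (x := x) (y := y)) ?le_xy ?le_yx ?eqxx.
Qed.

Lemma lt_trans y x z : lt x y -> lt y z -> lt x z.
Proof.
move=> xy yz; have /andP[_ le_xy] := xy; have /andP[_ le_yz] := yz.
rewrite /lt (le_trans le_xy le_yz) andbT; apply: contraTneq yz => ->.
exact: lt_asym.
Qed.

Lemma interval_closed_setU1 (S : {set T}) x :
  interval_closed le S -> x \notin S ->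
  interval_closed le (x |: S) <->
  (forall w z, w \in S -> lt x z -> lt z w -> z \in S) /\
  (forall u z, u \in S -> lt u z -> lt z x -> z \in S).
Proof.
move=> /interval_closedP icS xS; split.
  move=> /interval_closedP icSx; split=> [w z wS xz zw | u z uS uz zx].
    have : z \in x |: S by apply: (icSx x w); rewrite // !inE ?eqxx ?wS ?orbT.
    by rewrite in_setU1 => /orP[/eqP zx|//]; move: xz; rewrite zx /lt eqxx.
  have : z \in x |: S by apply: (icSx u x); rewrite // !inE ?eqxx ?uS ?orbT.
  by rewrite in_setU1 => /orP[/eqP zx'|//]; move: zx; rewrite zx' /lt eqxx.
case=> above below; apply/interval_closedP => u w z.
rewrite !in_setU1 => /orP[/eqP->|uS] /orP[/eqP->|wS] uz zw.
- by rewrite (negbTE (lt_asym uz)) in zw.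
- by rewrite (above w z) ?orbT.
- by rewrite (below u z) ?orbT.
- by rewrite (icS u w z) ?orbT.
Qed.

(* I is the set being toggled; R is a candidate for Row(I). *)
Variables (I R : {set T}).
Hypothesis icI : interval_closed le I.

(* The decision taken at x when the elements above x are set as in R and
   those below x are set as in I: an element of I is removed iff it lies
   strictly between an element of I and an element of R, and an element
   outside I is added iff adding it preserves interval-closedness. *)
Definition rowmotion_spec : Prop := forall x, x \in R <->
  if x \in I then (exists2 u, u \in I & lt u x) /\ (exists2 w, w \in R & lt x w)
  else (forall w z, w \in R -> lt x z -> lt z w -> z \in R) /\
       (forall u z, u \in I -> lt u z -> lt z x -> z \in I).
Hypothesis R_spec : rowmotion_spec.

(* The state after toggling the elements of t: R on t, I elsewhere. *)
Definition partial_row (t : seq T) : {set T} :=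
  [set y | if y \in t then y \in R else y \in I].

Lemma toggle_partial_row x t :
  x \notin t -> (forall y, lt x y -> y \in t) -> (forall y, lt y x -> y \notin t) ->
  interval_closed le (partial_row t) -> toggle le x (partial_row t) = partial_row (x :: t).
Proof.
move=> xt above below icS; set S := partial_row t.
have Sx : (x \in S) = (x \in I) by rewrite inE (negbTE xt).
have Sabove y : lt x y -> (y \in S) = (y \in R) by move/above => yt; rewrite inE yt.
have Sbelow y : lt y x -> (y \in S) = (y \in I).
  by move/below => yt; rewrite inE (negbTE yt).
have -> : partial_row (x :: t) = if x \in R then x |: S else S :\ x.
  by apply/setP => y; case xR: (x \in R); rewrite !inE; case: eqVneq => [->|].
rewrite /toggle /sdiff1 Sx; have := R_spec x; case: ifP => xI spec_x.
- have rm_ic : interval_closed le (S :\ x) <-> ~ x \in R.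
    rewrite interval_closed_setD1 ?Sx //; split=> [not_between xR | xR' [u [w [uS wS ux xw]]]].
      have [[u uI ux] [w wR xw]] := spec_x.1 xR.
      by apply: not_between; exists u, w; rewrite Sbelow ?Sabove.
    apply: xR'; apply/spec_x; split; first by exists u; rewrite -?Sbelow.
    by exists w; rewrite -?Sabove.
  case: (boolP (x \in R)) => xR.
    rewrite ifF; last by apply/negP => /rm_ic.
    by apply/setP => y; rewrite in_setU1; case: eqVneq => [->|]; rewrite ?Sx ?xI.
  by rewrite ifT //; apply/rm_ic/negP.
- have add_ic : interval_closed le (x |: S) <-> x \in R.
    rewrite interval_closed_setU1 ?Sx ?xI // spec_x.
    split=> [[above_x below_x] | [above_x below_x]]; split.
    + move=> w z wR xz zw; have xw := lt_trans xz zw.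
      by rewrite -Sabove //; apply: (above_x w); rewrite ?Sabove.
    + move=> u z uI uz zx; have ux := lt_trans uz zx.
      by rewrite -Sbelow //; apply: (below_x u); rewrite ?Sbelow.
    + move=> w z wS xz zw; have xw := lt_trans xz zw.
      by rewrite Sabove //; apply: (above_x w); rewrite -?Sabove.
    + move=> u z uS uz zx; have ux := lt_trans uz zx.
      by rewrite Sbelow //; apply: (below_x u); rewrite -?Sbelow.
  case: (boolP (x \in R)) => xR; first by rewrite ifT //; apply/add_ic.
  rewrite ifF; last by apply/negP => /add_ic; rewrite (negbTE xR).
  by apply/setP => y; rewrite in_setD1; case: eqVneq => [->|]; rewrite ?Sx ?xI.
Qed.

(* t is an up-closed set listed compatibly with the order, i.e. a suffix of
   a linear extension. *)
Definition top_down (t : seq T) : Prop :=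
  forall x y, x \in t -> lt x y -> (y \in t) && (index x t < index y t).

Lemma top_down_behead x t : x \notin t -> top_down (x :: t) -> top_down t.
Proof.
move=> xt td y z yt yz; have xy : x != y by apply: contraNneq xt => ->.
have /andP[] := td y z (mem_behead (s := x :: t) yt) yz; rewrite /= (negbTE xy) in_cons.
by case: (eqVneq x z) => [<-|_] //= ->; rewrite ltnS.
Qed.

Lemma foldr_toggle_top_down t : uniq t -> top_down t ->
  foldr (toggle le) I t = partial_row t /\ interval_closed le (partial_row t).
Proof.
elim: t => [|x t IH] /=.
  by have -> : partial_row [::] = I by apply/setP => y; rewrite inE.
move=> /andP[xt ut] td; have [-> icS] := IH ut (top_down_behead xt td).
have above y : lt x y -> y \in t.
  move=> xy; have /andP[] := td x y (mem_head x t) xy; rewrite in_cons.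
  by case: eqVneq xy => [->|] //; rewrite /lt eqxx.
have below y : lt y x -> y \notin t.
  move=> yx; apply/negP => yt; have /andP[_] := td y x (mem_behead (s := x :: t) yt) yx.
  by rewrite /= eqxx.
rewrite toggle_partial_row //; split => //.
by rewrite -toggle_partial_row //; apply: toggle_interval_closed.
Qed.

Lemma Row_of_spec s : linear_extension le s -> Row le s I = R.
Proof.
case=> perm_s le_index.
have us : uniq s by rewrite (perm_uniq perm_s) enum_uniq.
have ms y : y \in s by rewrite (perm_mem perm_s) mem_enum.
have td : top_down s.
  move=> x y _ /andP[yx le_xy]; rewrite ms ltn_neqAle le_index // andbT.
  apply: contra yx => /eqP same_index; apply/eqP.
  by rewrite -(nth_index y (ms y)) -same_index nth_index.
rewrite /Row; have [-> _] := foldr_toggle_top_down us td.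
by apply/setP => y; rewrite inE ms.
Qed.

End Toggling.

Section Complement.
Variables (T : finType) (le : rel T) (I : {set T}).

Lemma compl_spec_upset :
  (forall x y, x \in I -> lt le x y -> y \in I) -> rowmotion_spec le I (~: I).
Proof.
move=> up x; rewrite in_setC; case xI: (x \in I) => /=.
  by split=> [|[_ [w wI xw]]] //; rewrite in_setC (up x w) in wI.
split=> [_|//]; split=> [w z | u z uI uz _]; last exact: up uI uz.
by rewrite !in_setC => wI _ zw; apply: contra wI => zI; apply: up zI zw.
Qed.

Lemma compl_spec_maximal :
  (forall x y, x \in I -> ~~ lt le x y) -> rowmotion_spec le I (~: I).
Proof.
move=> maxI x; rewrite in_setC; case xI: (x \in I) => /=.
  by split=> [|[[u uI ux] _]] //; move: (maxI u x uI); rewrite ux.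
split=> [_|//]; split=> [w z _ _ zw | u z uI uz _].
  by rewrite in_setC; apply/negP => zI; move: (maxI z w zI); rewrite zw.
by move: (maxI u z uI); rewrite uz.
Qed.

End Complement.

Section OrdinalSum.
Variables (n : nat) (a : 'I_n -> nat).
Local Notation T := (OSum a).
Local Notation le := (@osum_le n a).

Definition level (x : T) : nat := tag x.

Lemma osum_ltE (x y : T) : lt le x y = (level x < level y).
Proof.
by rewrite /lt /osum_le; case: (eqVneq x y) => [->|_] /=; rewrite ?ltnn.
Qed.

Lemma osum_anti : antisymmetric le.
Proof.
move=> x y; rewrite /osum_le eq_sym; case: eqVneq => //= _ /andP[xy yx].
by rewrite ltnNge (ltnW yx) in xy.
Qed.

Lemma osum_trans : transitive le.
Proof.
move=> y x z; rewrite /osum_le => /orP[/eqP-> //|xy] /orP[/eqP<-|yz].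
  by rewrite xy orbT.
by rewrite (ltn_trans xy yz) orbT.
Qed.

Lemma osum_interval_closedP (S : {set T}) :
  reflect (forall u w z, u \in S -> w \in S -> level u < level z -> level z < level w -> z \in S)
          (interval_closed le S).
Proof.
apply: (iffP (interval_closedP _ _)) => icS u w z uS wS.
  by move=> uz zw; apply: (icS u w z); rewrite ?osum_ltE.
by rewrite !osum_ltE; apply: icS.
Qed.

Lemma in_top_summand (x : T) : (x \in top_summand a) = (level x == n.-1).
Proof. by rewrite inE. Qed.

(* In the three exceptional cases of the theorem, Row(I) = P - I: if
   A_n <= I then I is an order filter, and if I <= A_n all its elements
   are maximal. *)
Lemma compl_spec_trivial (I : {set T}) : 0 < n -> (forall i, 0 < a i) ->
  interval_closed le I ->
  (I == set0) || (top_summand a \subset I) || (I \subset top_summand a) ->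
  rowmotion_spec le I (~: I).
Proof.
move=> n_gt0 a_gt0 /osum_interval_closedP icI.
case/orP => [/orP[/eqP-> | /subsetP topI] | /subsetP Itop].
- by apply: compl_spec_maximal => x y; rewrite in_set0.
- apply: compl_spec_upset => x y xI; rewrite osum_ltE => xy.
  have top_lt : n.-1 < n by rewrite ltn_predL.
  pose i := Ordinal top_lt.
  pose t : T := existT _ i (Ordinal (a_gt0 i)).
  have level_t : level t = n.-1 by [].
  have tI : t \in I by apply: topI; rewrite in_top_summand level_t.
  have [/eqP top_y | not_top_y] := boolP (level y == n.-1).
    by apply: topI; rewrite in_top_summand top_y.
  apply: (icI x t y) => //; have : level y < n := ltn_ord _.
  by rewrite level_t; lia.
apply: compl_spec_maximal => x y /Itop; rewrite in_top_summand osum_ltE => /eqP->.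
by have : level y < n := ltn_ord _; lia.
Qed.

Lemma Min_level (S : {set T}) m : m \in S -> (forall y, y \in S -> level m <= level y) ->
  Min le S = [set y in S | level y == level m].
Proof.
move=> mS m_min; apply/setP => y; rewrite !inE.
apply/andP/andP => [[yS /forallP y_min] | [yS /eqP ym]]; split => //.
  rewrite eqn_leq m_min // andbT leqNgt; apply/negP => my.
  move: (y_min m); rewrite mS /osum_le my orbT /= => /eqP mEy.
  by rewrite mEy ltnn in my.
apply/forallP => z; apply/implyP => zS; apply/implyP.
rewrite /osum_le => /orP[// | zy].
by have := m_min z zS; rewrite leqNgt -ym zy.
Qed.

Lemma Nabla_level (S : {set T}) m : m \in S -> (forall y, y \in S -> level m <= level y) ->
  Nabla le S = [set y | (y \in S) || (level m < level y)].
Proof.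
move=> mS m_min; apply/setP => y; rewrite !inE.
apply/existsP/orP => [[x /andP[xS]] | [yS | my]].
- rewrite /osum_le => /orP[/eqP <- | xy]; first by left.
  by right; exact: leq_ltn_trans (m_min x xS) xy.
- by exists y; rewrite yS /osum_le eqxx.
- by exists m; rewrite mS /osum_le my orbT.
Qed.

Lemma Delta_level (S : {set T}) m : m \in S -> (forall y, y \in S -> level y = level m) ->
  Delta le S = [set y | (y \in S) || (level y < level m)].
Proof.
move=> mS m_level; apply/setP => y; rewrite !inE.
apply/existsP/orP => [[x /andP[xS]] | [yS | ym]].
- rewrite /osum_le => /orP[/eqP -> | yx]; first by left.
  by right; rewrite -(m_level x xS).
- by exists y; rewrite yS /osum_le eqxx.
- by exists m; rewrite mS /osum_le ym orbT.
Qed.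

Definition window (I : {set T}) (l c : nat) : {set T} :=
  [set y | (l <= level y <= c) && ((y \notin I) || (l < level y < c))].

Section Window.
Variables (I : {set T}) (m0 zc : T).
Hypothesis icI : interval_closed le I.
Hypothesis m0I : m0 \in I.
Hypothesis m0_min : forall y, y \in I -> level m0 <= level y.
Hypothesis zcI : zc \notin I.
Hypothesis m0_zc : level m0 < level zc.
Hypothesis zc_min : forall y, y \notin I -> level m0 < level y -> level zc <= level y.
Local Notation l := (level m0).
Local Notation c := (level zc).

Lemma window_gap y : l < level y -> level y < c -> y \in I.
Proof. by move=> ly yc; apply/negPn/negP => /zc_min /(_ ly); rewrite leqNgt yc. Qed.

Lemma window_bounded y : y \in I -> level y <= c.
Proof.
move=> yI; rewrite leqNgt; apply/negP => cy; case/negP: zcI.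
exact: (osum_interval_closedP _ icI m0 y zc).
Qed.

Lemma window_eq : Delta le (ceiling le I) :\: Delta le (Min le I) = window I l c.
Proof.
have ceilE : ceiling le I = [set y | (y \notin I) && (level y == c)].
  rewrite /ceiling (Nabla_level m0I m0_min) (@Min_level _ zc).
  - apply/setP => y; rewrite !inE; case: (y \in I) => //=.
    by case: eqP => [->|]; rewrite ?m0_zc ?andbF.
  - by rewrite !inE zcI m0_zc orbT.
  - by move=> y; rewrite !inE => /andP[/negPf yI]; rewrite yI; apply: zc_min; rewrite yI.
rewrite (@Delta_level _ zc) ?(@Delta_level _ m0) ?(Min_level m0I m0_min) ?ceilE.
- by apply/setP => y; rewrite !inE; case: (y \in I) => /=; lia.
- by rewrite !inE m0I eqxx.
- by move=> y; rewrite !inE => /andP[_ /eqP].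
- by rewrite !inE zcI eqxx.
- by move=> y; rewrite !inE => /andP[_ /eqP].
Qed.

Lemma window_spec : rowmotion_spec le I (window I l c).
Proof.
have zc_window : zc \in window I l c by rewrite inE zcI leqnn (ltnW m0_zc).
have m0_window : m0 \notin window I l c by rewrite inE m0I ltnn andbF.
move=> x; rewrite inE; case xI: (x \in I) => /=.
  have := m0_min xI; have := window_bounded xI => xc lx; split.
    by case/andP=> _ /andP[lx' xc']; split; [exists m0 | exists zc]; rewrite ?osum_ltE.
  case=> [[u uI]]; rewrite osum_ltE => ux [w]; rewrite inE osum_ltE.
  by move=> /andP[/andP[_ wc] _] xw; have := m0_min uI; lia.
split=> [/andP[lx xc] | [above below]]; first split.
- move=> w z; rewrite inE !osum_ltE => /andP[/andP[_ wc] _] xz zw.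
  by rewrite inE; apply/andP; split; [lia | apply/orP; right; lia].
- move=> u z uI; rewrite !osum_ltE => uz zx; have := m0_min uI.
  by move=> lu; apply: window_gap; lia.
- case: (ltnP (level x) l) => [xl | lx].
    by have := above zc m0 zc_window; rewrite !osum_ltE (negbTE m0_window) => /(_ xl m0_zc).
  case: (leqP (level x) c) => [// | cx].
  by have := below m0 zc m0I; rewrite !osum_ltE (negbTE zcI) => /(_ m0_zc cx).
Qed.

End Window.

Lemma window_exists (I : {set T}) :
  ~~ (top_summand a \subset I) -> ~~ (I \subset top_summand a) ->
  exists m0 zc, [/\ m0 \in I, forall y, y \in I -> level m0 <= level y, zc \notin I,
    level m0 < level zc & forall y, y \notin I -> level m0 < level y -> level zc <= level y].
Proof.
case/subsetPn => t; rewrite in_top_summand => /eqP t_top tI.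
case/subsetPn => y1 y1I; rewrite in_top_summand => y1_not_top.
case: (arg_minnP level y1I) => m0 m0I m0_min.
have Pt : (t \notin I) && (level m0 < level t).
  have := m0_min y1 y1I; have : level y1 < n := ltn_ord _; rewrite tI t_top; lia.
case: (arg_minnP (P := [pred y | (y \notin I) && (level m0 < level y)]) level Pt) => zc /andP[zcI m0_zc] zc_min.
by exists m0, zc; split=> // y yI my; apply: zc_min; rewrite /= yI my.
Qed.

End OrdinalSum.

Theorem theorem3p12 (n : nat) (a : 'I_n -> nat)
    (hn : 0 < n) (ha : forall i, 0 < a i)
    (s : seq (OSum a)) (hs : linear_extension (@osum_le n a) s)
    (I : {set OSum a}) (hI : interval_closed (@osum_le n a) I) :
  Row (@osum_le n a) s I =
  if (I == set0) || (top_summand a \subset I) || (I \subset top_summand a)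
  then ~: I
  else Delta (@osum_le n a) (ceiling (@osum_le n a) I)
         :\: Delta (@osum_le n a) (Min (@osum_le n a) I).
Proof.
have anti := @osum_anti n a; have trans := @osum_trans n a.
case: ifP => [trivial | /negbT].
  by apply: (Row_of_spec anti trans hI _ hs); apply: compl_spec_trivial.
rewrite !negb_or => /andP[/andP[_ not_top_sub] not_sub_top].
have [m0 [zc [m0I m0_min zcI m0_zc zc_min]]] := window_exists not_top_sub not_sub_top.
rewrite (window_eq hI m0I m0_min zcI m0_zc zc_min).
by apply: (Row_of_spec anti trans hI _ hs); apply: window_spec.
Qed.
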